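(* Let $A$ and $B$ be tridendriform algebras over a field $\mathbb{K}$. Define three bilinear products on $A\otimes B$ by $$(a\otimes b)\prec(c\otimes d)=(a*c)\otimes(b\prec d),\quad (a\otimes b)\cdot(c\otimes d)=(a*c)\otimes(b\cdot d),\quad (a\otimes b)\succ(c\otimes d)=(a*c)\otimes(b\succ d)$$ for $a,c\in A$, $b,d\in B$. Then $(A\otimes B,\prec,\cdot,\succ)$ is a tridendriform algebra.
   Context: A tridendriform algebra over $\mathbb{K}$ is a vector space $A$ with three bilinear products $\prec,\cdot,\succ$ such that, writing $a*b=a\prec b+a\cdot b+a\succ b$, for all $a,b,c\in A$: $(a\prec b)\prec c=a\prec(b*c)$, $(a\succ b)\prec c=a\succ(b\prec c)$, $(a*b)\succ c=a\succ(b\succ c)$, $(a\succ b)\cdot c=a\succ(b\cdot c)$, $(a\prec b)\cdot c=a\cdot(b\succ c)$, $(a\cdot b)\prec c=a\cdot(b\prec c)$, $(a\cdot b)\cdot c=a\cdot(b\cdot c)$. (These imply that $*$ is associative.) In the claim, $a*c$ denotes this associative product of $A$. *)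

From HB Require Import structures.
From mathcomp Require Import all_boot all_algebra.
Set Implicit Arguments. Unset Strict Implicit. Unset Printing Implicit Defensive.
Import GRing.Theory.
Local Open Scope ring_scope.

Definition lin_fun (K : fieldType) (U V : lmodType K) (f : U -> V) : Prop :=
  forall (k : K) (x y : U), f (k *: x + y) = k *: f x + f y.

Definition bilin (K : fieldType) (U V W : lmodType K) (f : U -> V -> W) : Prop :=
  (forall a : U, lin_fun (f a)) /\ (forall b : V, lin_fun (fun a => f a b)).

(* The associative product a * b = a < b + a . b + a > b. *)
Definition tstar (K : fieldType) (A : lmodType K) (pr dt su : A -> A -> A)
  (a b : A) : A := pr a b + dt a b + su a b.

Definition tridendriform (K : fieldType) (A : lmodType K)
  (pr dt su : A -> A -> A) : Prop :=
  let st := tstar pr dt su in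
  [/\ bilin pr, bilin dt, bilin su &
  forall a b c : A,
  pr (pr a b) c = pr a (st b c) /\
  pr (su a b) c = su a (pr b c) /\
  su (st a b) c = su a (su b c) /\
  dt (su a b) c = su a (dt b c) /\
  dt (pr a b) c = dt a (su b c) /\
  pr (dt a b) c = dt a (pr b c) /\
  dt (dt a b) c = dt a (dt b c)].

Definition is_tensor_product (K : fieldType) (A B T : lmodType K)
  (t : A -> B -> T) : Prop :=
  bilin t /\
  forall (W : lmodType K) (f : A -> B -> W), bilin f ->
    exists! g : T -> W, lin_fun g /\ forall a b, g (t a b) = f a b.

Definition tensor_products (K : fieldType) (A B T : lmodType K)
  (t : A -> B -> T) (prA dtA suA : A -> A -> A) (prB dtB suB : B -> B -> B)
  (pr dt su : T -> T -> T) : Prop :=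
  [/\ bilin pr, bilin dt, bilin su &
  forall (a c : A) (b d : B),
  [/\ pr (t a b) (t c d) = t (tstar prA dtA suA a c) (prB b d),
      dt (t a b) (t c d) = t (tstar prA dtA suA a c) (dtB b d) &
      su (t a b) (t c d) = t (tstar prA dtA suA a c) (suB b d)]].

From HB Require Import structures.
From mathcomp Require Import all_boot all_algebra.
From mathcomp Require Import boolp functions.
Set Implicit Arguments. Unset Strict Implicit. Unset Printing Implicit Defensive.
Import GRing.Theory.
Local Open Scope ring_scope.

(* Each tridendriform axiom of B has the shape
   p (q x y) z = p' x (q' y z); tensoring it with the associativity
   (a * c) * e = a * (c * e) of A gives the corresponding axiom of A (x) B on
   pure tensors, and both sides being trilinear, it holds everywhere.  The
   products themselves exist by the universal property, applied once to get
   the partial maps T -> T and once more to the space of functions T -> T. *)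

Section LinearMaps.
Variable K : fieldType.
Implicit Types U V W : lmodType K.

Lemma lin_funD U V (f : U -> V) : lin_fun f -> {morph f : x y / x + y}.
Proof. by move=> lin_f x y; rewrite -[x in LHS]scale1r lin_f scale1r. Qed.

Lemma lin_fun_comp U V W (f : V -> W) (g : U -> V) :
  lin_fun f -> lin_fun g -> lin_fun (f \o g).
Proof. by move=> lin_f lin_g k x y /=; rewrite lin_g lin_f. Qed.

Lemma lin_fun_add U V (f g : U -> V) :
  lin_fun f -> lin_fun g -> lin_fun (f + g).
Proof.
by move=> lin_f lin_g k x y; rewrite !fctE lin_f lin_g scalerDr addrACA.
Qed.

Lemma lin_fun_scale U V (k : K) (f : U -> V) :
  lin_fun f -> lin_fun (k *: f).
Proof. by move=> lin_f c x y; rewrite !fctE lin_f scalerDr !scalerA mulrC. Qed.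

Lemma lin_fun_apply U (X : Type) V (F : U -> X -> V) (x : X) :
  lin_fun F -> lin_fun (F^~ x).
Proof. by move=> lin_F k u v; rewrite lin_F. Qed.

Lemma bilin_tstar V (pr dt su : V -> V -> V) :
  bilin pr -> bilin dt -> bilin su -> bilin (tstar pr dt su).
Proof.
move=> [pr1 pr2] [dt1 dt2] [su1 su2].
split=> a; first exact: lin_fun_add (lin_fun_add (pr1 a) (dt1 a)) (su1 a).
exact: lin_fun_add (lin_fun_add (pr2 a) (dt2 a)) (su2 a).
Qed.

End LinearMaps.

Section TensorProduct.
Variables (K : fieldType) (A B T : lmodType K) (t : A -> B -> T).
Hypothesis tensorT : is_tensor_product t.

Lemma tensor_lin_ext (V : lmodType K) (phi psi : T -> V) :
  lin_fun phi -> lin_fun psi -> (forall a b, phi (t a b) = psi (t a b)) ->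
  phi =1 psi.
Proof.
move=> lin_phi lin_psi eq_phi_psi x; have [[t1 t2] univT] := tensorT.
have bil : bilin (fun a b => phi (t a b)).
  by split=> c; apply: lin_fun_comp.
have [g [_ uniq_g]] := univT V _ bil.
have <- := uniq_g phi (conj lin_phi (fun _ _ => erefl)).
by have <- := uniq_g psi (conj lin_psi (fun a b => esym (eq_phi_psi a b))).
Qed.

Lemma tensor_lift (V : lmodType K) (f : A -> B -> V) :
  bilin f -> {g : T -> V | lin_fun g & forall a b, g (t a b) = f a b}.
Proof.
move=> bil_f; have [g [[lin_g g_t] _]] := cid (tensorT.2 V f bil_f).
by exists g.
Qed.

Lemma tensor_lift2 (V : lmodType K) (f : A -> B -> A -> B -> V) :
  (forall c d, bilin (fun a b => f a b c d)) -> (forall a b, bilin (f a b)) ->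
  exists P : T -> T -> V, bilin P /\
    forall a b c d, P (t a b) (t c d) = f a b c d.
Proof.
move=> bil_ab bil_cd.
pose G c d := sval (tensor_lift (bil_ab c d)).
have lin_G c d : lin_fun (G c d) by rewrite /G; case: tensor_lift.
have G_t c d a b : G c d (t a b) = f a b c d by rewrite /G; case: tensor_lift.
have bil_G : bilin G.
  split=> [c | d] k u v; apply/funext; apply: tensor_lin_ext => [||a b] /=.
  - exact: lin_G.
  - exact: lin_fun_add (lin_fun_scale k (lin_G _ _)) (lin_G _ _).
  - by case: (bil_cd a b) => lin_f _; rewrite !fctE !G_t lin_f.
  - exact: lin_G.
  - exact: lin_fun_add (lin_fun_scale k (lin_G _ _)) (lin_G _ _).
  - by case: (bil_cd a b) => _ lin_f; rewrite !fctE !G_t lin_f.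
have [H lin_H H_t] := tensor_lift bil_G.
exists (fun x y => H y x); split=> [|a b c d]; last by rewrite H_t G_t.
split=> x; first exact: lin_fun_apply.
move=> k y z; apply: (tensor_lin_ext (phi := fun x => H x (k *: y + z))
  (psi := fun x => k *: H x y + H x z)) => [||c d].
- exact: lin_fun_apply.
- exact: lin_fun_add (lin_fun_scale k (lin_fun_apply _ lin_H))
    (lin_fun_apply _ lin_H).
- by rewrite H_t lin_G.
Qed.

Definition tensor_mul_of (mA : A -> A -> A) (mB : B -> B -> B)
  (p : T -> T -> T) : Prop :=
  bilin p /\ forall a b c d, p (t a b) (t c d) = t (mA a c) (mB b d).

Lemma tensor_mul_exists (mA : A -> A -> A) (mB : B -> B -> B) :
  bilin mA -> bilin mB -> exists p, tensor_mul_of mA mB p.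
Proof.
move=> [mA1 mA2] [mB1 mB2]; have [[t1 t2] _] := tensorT.
apply: tensor_lift2 => [c d | a b].
  split=> x; first exact: (lin_fun_comp (t1 (mA x c)) (mB2 d)).
  exact: (lin_fun_comp (t2 (mB x d)) (mA2 c)).
split=> x; first exact: (lin_fun_comp (t1 (mA a x)) (mB1 b)).
exact: (lin_fun_comp (t2 (mB b x)) (mA1 a)).
Qed.

Lemma tensor_mul_tstar (mA : A -> A -> A) (prB dtB suB : B -> B -> B)
  (pr dt su : T -> T -> T) :
  tensor_mul_of mA prB pr -> tensor_mul_of mA dtB dt -> tensor_mul_of mA suB su ->
  tensor_mul_of mA (tstar prB dtB suB) (tstar pr dt su).
Proof.
move=> [bil_pr pr_t] [bil_dt dt_t] [bil_su su_t]; have [[t1 _] _] := tensorT.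
split=> [|a b c d]; first exact: bilin_tstar.
by rewrite /tstar pr_t dt_t su_t -!(lin_funD (t1 _)).
Qed.

Lemma tensor_mul_assoc_law (mA : A -> A -> A) (pB qB pB' qB' : B -> B -> B)
  (p q p' q' : T -> T -> T) :
  associative mA ->
  tensor_mul_of mA pB p -> tensor_mul_of mA qB q ->
  tensor_mul_of mA pB' p' -> tensor_mul_of mA qB' q' ->
  (forall b d f, pB (qB b d) f = pB' b (qB' d f)) ->
  forall x y z, p (q x y) z = p' x (q' y z).
Proof.
move=> assoc_mA [[p1 p2] p_t] [[q1 q2] q_t] [[p'1 p'2] p'_t] [[q'1 q'2] q'_t].
move=> lawB x y z.
have pure3 a b c d e f :
    p (q (t a b) (t c d)) (t e f) = p' (t a b) (q' (t c d) (t e f)).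
  by rewrite q_t p_t q'_t p'_t assoc_mA lawB.
have pure2 a b c d : p (q (t a b) (t c d)) z = p' (t a b) (q' (t c d) z).
  apply: (tensor_lin_ext (phi := p (q (t a b) (t c d)))
    (psi := fun z => p' (t a b) (q' (t c d) z))) => //.
  exact: lin_fun_comp (p'1 _) (q'1 _).
have pure1 a b : p (q (t a b) y) z = p' (t a b) (q' y z).
  apply: (tensor_lin_ext (phi := fun y => p (q (t a b) y) z)
    (psi := fun y => p' (t a b) (q' y z))) => //.
  - exact: lin_fun_comp (p2 z) (q1 _).
  - exact: lin_fun_comp (p'1 _) (q'2 z).
apply: (tensor_lin_ext (phi := fun x => p (q x y) z)
  (psi := fun x => p' x (q' y z))) => //.
exact: lin_fun_comp (p2 z) (q2 y).
Qed.

End TensorProduct.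

Lemma tstar_assoc (K : fieldType) (A : lmodType K) (pr dt su : A -> A -> A) :
  tridendriform pr dt su -> associative (tstar pr dt su).
Proof.
move=> [[pr1 pr2] [dt1 dt2] [su1 su2] axA] a b c.
have [E1 [E2 [E3 [E4 [E5 [E6 E7]]]]]] := axA a b c.
apply/esym; rewrite {1}/tstar E3 {1}/tstar.
rewrite !(lin_funD (pr2 c)) !(lin_funD (dt2 c)).
rewrite E1 E2 E4 E5 E6 E7 /tstar !(lin_funD (dt1 a)) !(lin_funD (su1 a)).
rewrite -!addrA; congr (_ + (_ + _)).
set y1 := su a (pr b c).
by rewrite (addrCA y1) (addrCA y1) addrCA.
Qed.

Theorem mainTheorem1 (K : fieldType) (A B T : lmodType K)
  (prA dtA suA : A -> A -> A) (prB dtB suB : B -> B -> B)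
  (t : A -> B -> T) :
  tridendriform prA dtA suA ->
  tridendriform prB dtB suB ->
  is_tensor_product t ->
  (exists pr dt su : T -> T -> T,
      tensor_products t prA dtA suA prB dtB suB pr dt su) /\
  (forall pr dt su : T -> T -> T,
      tensor_products t prA dtA suA prB dtB suB pr dt su ->
      tridendriform pr dt su).
Proof.
move=> triA triB tensorT.
have [bil_prA bil_dtA bil_suA _] := triA.
have [bil_prB bil_dtB bil_suB axB] := triB.
have bil_stA := bilin_tstar bil_prA bil_dtA bil_suA.
split.
  have [pr [bil_pr pr_t]] := tensor_mul_exists tensorT bil_stA bil_prB.
  have [dt [bil_dt dt_t]] := tensor_mul_exists tensorT bil_stA bil_dtB.
  have [su [bil_su su_t]] := tensor_mul_exists tensorT bil_stA bil_suB.
  by exists pr, dt, su; split.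
move=> pr dt su [bil_pr bil_dt bil_su prods_t].
have [Tpr Tdt Tsu] : [/\ tensor_mul_of t (tstar prA dtA suA) prB pr,
    tensor_mul_of t (tstar prA dtA suA) dtB dt &
    tensor_mul_of t (tstar prA dtA suA) suB su].
  by split; split=> // a b c d; case: (prods_t a c b d).
have Tst := tensor_mul_tstar tensorT Tpr Tdt Tsu.
have assocA := tstar_assoc triA.
split=> // x y z; split; [|split; [|split; [|split; [|split; [|split]]]]];
  [ apply: (tensor_mul_assoc_law tensorT assocA Tpr Tpr Tpr Tst)
  | apply: (tensor_mul_assoc_law tensorT assocA Tpr Tsu Tsu Tpr)
  | apply: (tensor_mul_assoc_law tensorT assocA Tsu Tst Tsu Tsu)
  | apply: (tensor_mul_assoc_law tensorT assocA Tdt Tsu Tsu Tdt)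
  | apply: (tensor_mul_assoc_law tensorT assocA Tdt Tpr Tdt Tsu)
  | apply: (tensor_mul_assoc_law tensorT assocA Tpr Tdt Tdt Tpr)
  | apply: (tensor_mul_assoc_law tensorT assocA Tdt Tdt Tdt Tdt) ];
  by move=> b d f; case: (axB b d f) => [? [? [? [? [? [? ?]]]]]].
Qed.
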